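(* Let $G$ be a finite group and let $U_1,U_2\le G$ be almost conjugate. Suppose there exists a normal subgroup $N\trianglelefteq G$ containing both $U_1$ and $U_2$ as subgroups of index two. Then $U_1$ is conjugate to $U_2$ in $G$.
   Context: Two subgroups $U_1,U_2$ of a finite group $G$ are almost conjugate if for every conjugacy class $C$ of $G$ one has $|U_1\cap C|=|U_2\cap C|$. *)

From mathcomp Require Import all_boot all_fingroup.
Set Implicit Arguments.
Unset Strict Implicit.
Unset Printing Implicit Defensive.
Local Open Scope group_scope.

Definition almost_conjugate (gT : finGroupType) (G U1 U2 : {set gT}) : Prop :=
  forall C, C \in classes G -> #|U1 :&: C| = #|U2 :&: C|.

From mathcomp Require Import all_boot all_fingroup.
From mathcomp Require Import zify.
Set Implicit Arguments.
Unset Strict Implicit.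
Unset Printing Implicit Defensive.
Local Open Scope group_scope.

(* For any S, the sum over g in G of |U^g ∩ S| equals the sum over y in U of
   #{g in G | y^g in S}; the summand is a class function of G, so the sum is
   the same for almost conjugate U1 and U2.  Two distinct subgroups V, W of
   index 2 in N satisfy |V : V ∩ W| = |VW : W| = 2, hence |V ∩ W| = |V \ W|.
   If no G-conjugate of U1 is U2, taking S = U2 and S = ~U2 therefore gives
   equal sums for U1, whereas for U2 the term g = 1 alone (|U2| against 0)
   makes the first sum strictly larger. *)

Section IndexTwo.

Variables (gT : finGroupType) (N V W : {group gT}).
Hypotheses (sVN : V \subset N) (sWN : W \subset N).
Hypotheses (iVN : #|N : V| = 2) (iWN : #|N : W| = 2).

Lemma index2_indexg : V :!=: W -> #|V : W| = 2.
Proof.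
move=> neVW.
have nWV : V \subset 'N(W).
  exact: subset_trans sVN (normal_norm (index2_normal sWN iWN)).
have notsVW : ~~ (V \subset W).
  apply: contra neVW => sVW; rewrite eqEcard sVW -(leq_pmul2r (isT : 0 < 2)).
  by rewrite -{1}iWN -iVN !Lagrange ?leqnn.
have sWVN : W <*> V \subset N by rewrite join_subG sWN sVN.
have := Lagrange_index sWVN (joing_subl W V).
rewrite /= norm_joinEr // indexMg iWN.
have := indexg_gt0 N (W * V); have : 1 < #|V : W| by rewrite indexg_gt1.
nia.
Qed.

Lemma card_setI_setD_index2 : V :!=: W -> #|V :&: W| = #|V :\: W|.
Proof.
move=> neVW; have := LagrangeI V W; have := cardsID W V.
rewrite index2_indexg //; lia.
Qed.

Lemma leq_card_setD_setI_index2 : #|V :\: W| <= #|V :&: W|.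
Proof.
have [->|neVW] := eqVneq V W; first by rewrite setDv cards0.
by rewrite card_setI_setD_index2.
Qed.

End IndexTwo.

Section ClassSums.

Variables (gT : finGroupType) (G : {group gT}).

Lemma sum_class_invariant (U : {set gT}) (f : gT -> nat) :
    U \subset G -> (forall y h, h \in G -> f (y ^ h) = f y) ->
  \sum_(y in U) f y = \sum_(C in classes G) (#|U :&: C| * f (repr C))%N.
Proof.
move=> sUG fJ.
rewrite (partition_big (class^~ G) (mem (classes G))) => [|y Uy]; last first.
  exact/mem_classes/(subsetP sUG).
apply: eq_bigr => _ /imsetP[x Gx ->].
have fxG : {in x ^: G, forall y, f y = f x}.
  by move=> _ /imsetP[h Gh ->]; apply: fJ.
rewrite fxG; last exact: mem_repr (class_refl G x).
transitivity (\sum_(y in U :&: x ^: G) f x); last by rewrite sum_nat_const.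
apply: eq_big => [y | y /andP[_ /eqP yG]].
  rewrite in_setI; case: (y \in U) => //=.
  by apply/idP/idP => [/eqP <- | /class_eqP ->]; rewrite ?class_refl.
by apply: fxG; rewrite -yG class_refl.
Qed.

Lemma almost_conjugate_sum_class_invariant (U1 U2 : {set gT}) (f : gT -> nat) :
    U1 \subset G -> U2 \subset G -> almost_conjugate G U1 U2 ->
    (forall y h, h \in G -> f (y ^ h) = f y) ->
  \sum_(y in U1) f y = \sum_(y in U2) f y.
Proof.
move=> sU1G sU2G acU fJ; rewrite !sum_class_invariant //.
by apply: eq_bigr => C GC; rewrite acU.
Qed.

Lemma card_conjg_transporter (S : {set gT}) y h : h \in G ->
  #|[set g in G | (y ^ h) ^ g \in S]| = #|[set g in G | y ^ g \in S]|.
Proof.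
move=> Gh; rewrite -[RHS](card_lcoset _ h^-1); apply: eq_card => g.
by rewrite mem_lcoset invgK !inE groupMl // conjgM.
Qed.

Lemma sum_card_conjsgI (U S : {set gT}) :
  \sum_(g in G) #|U :^ g :&: S| = \sum_(y in U) #|[set g in G | (y ^ g)%g \in S]|.
Proof.
transitivity (\sum_(g in G) \sum_(y in U) nat_of_bool ((y ^ g)%g \in S)).
  apply: eq_bigr => g _; rewrite -(cardJg _ g^-1) conjIg conjsgK -sum1_card.
  rewrite big_mkcond [RHS]big_mkcond; apply: eq_bigr => y _.
  by rewrite inE mem_conjgV; case: (y \in U); case: (_ \in S).
rewrite exchange_big; apply: eq_bigr => y _.
by rewrite -sum1dep_card big_mkcondr; apply: eq_bigr => g _; case: (_ \in S).
Qed.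

Lemma almost_conjugate_sum_card_conjsgI (U1 U2 S : {set gT}) :
    U1 \subset G -> U2 \subset G -> almost_conjugate G U1 U2 ->
  \sum_(g in G) #|U1 :^ g :&: S| = \sum_(g in G) #|U2 :^ g :&: S|.
Proof.
move=> sU1G sU2G acU; rewrite !sum_card_conjsgI.
apply: almost_conjugate_sum_class_invariant => // y h Gh.
exact: card_conjg_transporter.
Qed.

End ClassSums.

Theorem proposition5p7 (gT : finGroupType) (G N U1 U2 : {group gT}) :
  U1 \subset G -> U2 \subset G ->
  almost_conjugate G U1 U2 ->
  N <| G -> U1 \subset N -> U2 \subset N ->
  #|N : U1| = 2 -> #|N : U2| = 2 ->
  exists2 g, g \in G & U2 :=: U1 :^ g.
Proof.
move=> sU1G sU2G acU nsNG sU1N sU2N iU1N iU2N.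
case: (boolP [exists g in G, U1 :^ g == U2]) => [|noconj].
  by case/exists_inP=> g Gg /eqP defU2; exists g.
have conj_index2 (U : {group gT}) g : g \in G -> U \subset N -> #|N : U| = 2 ->
    U :^ g \subset N /\ #|N : U :^ g| = 2.
  move=> Gg sUN iUN; have /normP <- := subsetP (normal_norm nsNG) g Gg.
  by rewrite conjSg indexJg.
pose conj_meets (U S : {set gT}) := \sum_(g in G) #|U :^ g :&: S|.
have conj_meetsU1 : conj_meets U1 U2 = conj_meets U1 (~: U2).
  apply: eq_bigr => g Gg; have [sU1gN iU1gN] := conj_index2 U1 g Gg sU1N iU1N.
  rewrite -setDE (@card_setI_setD_index2 _ N (U1 :^ g)%G) //.
  apply: contraNneq noconj => defU2.
  by apply/exists_inP; exists g; rewrite // defU2.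
have conj_meetsU2 : conj_meets U2 (~: U2) < conj_meets U2 U2.
  rewrite /conj_meets (bigD1 1) // [X in _ < X](bigD1 1) //=.
  rewrite conjsg1 setICr setIid cards0.
  rewrite add0n -add1n; apply: leq_add; first exact: cardG_gt0.
  apply: leq_sum => g /andP[Gg _].
  have [sU2gN iU2gN] := conj_index2 U2 g Gg sU2N iU2N.
  by rewrite -setDE (@leq_card_setD_setI_index2 _ N (U2 :^ g)%G).
move: conj_meetsU2; rewrite /conj_meets.
rewrite -!(almost_conjugate_sum_card_conjsgI _ sU1G sU2G acU).
by rewrite -/(conj_meets U1 U2) -/(conj_meets U1 (~: U2)) conj_meetsU1 ltnn.
Qed.
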